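(* Let $X=\{x_j:j\in J\}\subset\mathbb{R}^2$ be finite with $n=|J|$. Then the quadratic min-power centre $s^*$ of $X$ lies in $\mathrm{conv}(\mathcal{M})$, where $\mathcal{M}=\{M_j:j\in J\}$, $M_j=\frac{1}{n+1}\big(x_j+\sum_{i\in J}x_i\big)$.
   Context: $s^*$ is the unique minimiser of $P(s)=\sum_{i\in J}\|s-x_i\|^2+\max_{i\in J}\|s-x_i\|^2$. *)

From mathcomp Require Import all_boot all_order all_algebra.
From mathcomp Require Import reals.
Set Implicit Arguments. Unset Strict Implicit. Unset Printing Implicit Defensive.
Import Order.TTheory GRing.Theory Num.Theory.
Local Open Scope ring_scope.

Definition sqdist (R : realType) (s y : 'rV[R]_2) : R :=
  \sum_(k < 2) (s 0 k - y 0 k) ^+ 2.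

(* P(s) = sum_i |s - x_i|^2 + max_i |s - x_i|^2 ; the max of nonnegative
   reals is taken with neutral element 0 (harmless since all terms are >= 0) *)
Definition Ppow (R : realType) (J : finType) (x : J -> 'rV[R]_2) (s : 'rV[R]_2) : R :=
  \sum_(i : J) sqdist s (x i) + \big[Num.max/0]_(i : J) sqdist s (x i).

Definition Mpt (R : realType) (J : finType) (x : J -> 'rV[R]_2) (j : J) : 'rV[R]_2 :=
  (#|J|.+1%:R)^-1 *: (x j + \sum_(i : J) x i).

Definition in_conv (R : realType) (J : finType) (M : J -> 'rV[R]_2) (p : 'rV[R]_2) : Prop :=
  exists l : J -> R, (forall j, 0 <= l j) /\ \sum_(j : J) l j = 1 /\
    p = \sum_(j : J) l j *: M j.

(* Put p := (n+1) s - sum_i x_i.  The affine map y |-> (y + sum_i x_i)/(n+1)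
   sends x_j to M_j and p to s, so it suffices to show p in conv X.  Otherwise,
   by Gordan's alternative in the plane, some direction d has d.(x_j - p) > 0
   for every j.  Moving s to s + e d changes each of the sums
   sum_i |s - x_i|^2 + |s - x_j|^2 by -2e d.(x_j - p) + O(e^2), so for small
   e > 0 all of them decrease strictly, hence so does their maximum P(s). *)
From mathcomp Require Import all_boot all_order all_algebra.
From mathcomp Require Import reals ring lra.
Import Order.TTheory GRing.Theory Num.Theory.
Local Open Scope ring_scope.

Lemma exists_argmax {R : realDomainType} {J : finType} (P : pred J) (F : J -> R) :
  (exists i, P i) -> exists2 i0, P i0 & forall i, P i -> F i <= F i0.
Proof.
by move=> [i Pi]; case: (arg_maxP F Pi) => i0 Pi0 hmax; exists i0.
Qed.

Lemma finite_strict_separation {R : realFieldType} {J : finType} (A B : pred J)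
    (F : J -> R) :
  (forall i j, A i -> B j -> F i < F j) ->
  exists b, (forall i, A i -> F i < b) /\ (forall j, B j -> b < F j).
Proof.
move=> hAB.
have [/existsP exA|/existsPn nA] := boolP [exists i, A i];
  have [/existsP exB|/existsPn nB] := boolP [exists j, B j].
- have [i0 Ai0 maxA] := exists_argmax _ F exA.
  have [j0 Bj0 minB] := exists_argmax _ (fun j => - F j) exB.
  have lt0 := hAB _ _ Ai0 Bj0.
  exists ((F i0 + F j0) / 2); split.
  + by move=> i /maxA; lra.
  + by move=> j /minB; lra.
- have [i0 Ai0 maxA] := exists_argmax _ F exA.
  exists (F i0 + 1); split; last by move=> j; rewrite (negbTE (nB j)).
  by move=> i /maxA; lra.
- have [j0 Bj0 minB] := exists_argmax _ (fun j => - F j) exB.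
  exists (F j0 - 1); split; first by move=> i; rewrite (negbTE (nA i)).
  by move=> j /minB; lra.
- by exists 0; split=> [i|j]; rewrite ?(negbTE (nA i)) ?(negbTE (nB j)).
Qed.

Section PlanarGordan.
Context {R : realFieldType} {J : finType} (u v : J -> R).

Definition origin_in_hull := exists l : J -> R,
  [/\ forall j, 0 <= l j, \sum_j l j = 1,
      \sum_j l j * u j = 0 & \sum_j l j * v j = 0].

Definition balanced_weight (m : J -> R) (c : R) :=
  [/\ forall j, 0 <= m j, 0 < \sum_j m j,
      \sum_j m j * v j = 0 & \sum_j m j * u j = c].

Lemma sum_comb (a b : R) (f g : J -> R) :
  \sum_j (a * f j - b * g j) = a * \sum_j f j - b * \sum_j g j.
Proof. by rewrite sumrB -!mulr_sumr. Qed.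

Lemma sum_comb_mul (a b : R) (f g w : J -> R) :
  \sum_j (a * f j - b * g j) * w j =
  a * \sum_j f j * w j - b * \sum_j g j * w j.
Proof.
rewrite -sum_comb; apply: eq_bigr => j _; rewrite mulrBl; ring.
Qed.

Lemma balanced_weight0_origin m : balanced_weight m 0 -> origin_in_hull.
Proof.
move=> [m_ge0 sum_gt0 mv mu]; set S := \sum_j m j in sum_gt0 *.
have normalize (w : J -> R) : \sum_j m j / S * w j = (\sum_j m j * w j) / S.
  by rewrite mulr_suml; apply: eq_bigr => j _; rewrite mulrAC.
exists (fun j => m j / S); split.
- by move=> j; rewrite divr_ge0 // ltW.
- by rewrite -mulr_suml divff // gt_eqF.
- by rewrite normalize mu mul0r.
- by rewrite normalize mv mul0r.
Qed.

(* A positive combination of the two weightings cancels the [u]-moment. *)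
Lemma balanced_weights_origin m1 m2 c1 c2 :
  balanced_weight m1 c1 -> balanced_weight m2 c2 -> c1 <= 0 -> 0 <= c2 ->
  origin_in_hull.
Proof.
move=> h1 h2 c1_le0 c2_ge0.
have [c1_0|c1_n0] := eqVneq c1 0.
  by apply: (@balanced_weight0_origin m1); rewrite -c1_0.
have [c2_0|c2_n0] := eqVneq c2 0.
  by apply: (@balanced_weight0_origin m2); rewrite -c2_0.
have c1_lt0 : c1 < 0 by rewrite lt_neqAle c1_n0.
have c2_gt0 : 0 < c2 by rewrite lt_neqAle eq_sym c2_n0.
move: h1 h2 => [m1_ge0 s1 v1 u1] [m2_ge0 s2 v2 u2].
apply: (@balanced_weight0_origin (fun j => c2 * m1 j - c1 * m2 j)); split.
- by move=> j; have := m1_ge0 j; have := m2_ge0 j; nra.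
- by rewrite sum_comb; nra.
- by rewrite sum_comb_mul v1 v2 !mulr0 subrr.
- by rewrite sum_comb_mul u1 u2 mulrC subrr.
Qed.

Definition point_mass (j k : J) : R := (k == j)%:R.

Lemma point_mass_ge0 j k : 0 <= point_mass j k.
Proof. exact: ler0n. Qed.

Lemma sum_point_mass_mul j (w : J -> R) : \sum_k point_mass j k * w k = w j.
Proof.
rewrite (bigD1 j) //= big1 /point_mass ?eqxx ?mul1r ?addr0 // => k /negbTE ->.
by rewrite mul0r.
Qed.

Lemma sum_point_mass j : \sum_k point_mass j k = 1.
Proof.
by rewrite -[RHS](sum_point_mass_mul j (fun=> 1)); apply: eq_bigr => k _; rewrite mulr1.
Qed.

Lemma balanced_point_mass j : v j = 0 -> balanced_weight (point_mass j) (u j).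
Proof.
by move=> vj0; split; rewrite ?sum_point_mass_mul ?sum_point_mass ?ltr01.
Qed.

Lemma balanced_pair i j : 0 < v i -> v j < 0 ->
  balanced_weight (fun k => v i * point_mass j k - v j * point_mass i k)
                  (v i * u j - v j * u i).
Proof.
move=> vi_gt0 vj_lt0; split.
- by move=> k; have := point_mass_ge0 j k; have := point_mass_ge0 i k; nra.
- by rewrite sum_comb !sum_point_mass; lra.
- by rewrite sum_comb_mul !sum_point_mass_mul mulrC subrr.
- by rewrite sum_comb_mul !sum_point_mass_mul.
Qed.

(* For fixed [a], the constraints [0 < a * u j + b * v j] on [b] are lower
   bounds (v j > 0), upper bounds (v j < 0) or sign conditions (v j = 0);
   [extendable a] says they are consistent. *)
Definition extendable (a : R) :=
  [forall j, (v j == 0) ==> (0 < a * u j)] &&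
  [forall i, forall j, (0 < v i) && (v j < 0) ==> (0 < a * (v i * u j - v j * u i))].

Lemma not_extendable_balanced a :
  ~~ extendable a -> exists m c, balanced_weight m c /\ a * c <= 0.
Proof.
rewrite negb_and => /orP [/existsP [j] | /existsP [i /existsP [j]]];
  rewrite negb_imply -leNgt => /andP [hv hc].
- by exists (point_mass j), (u j); split=> //; apply/balanced_point_mass/eqP.
- move/andP: hv => [vi_gt0 vj_lt0].
  by do 2 eexists; split; [apply: balanced_pair vi_gt0 vj_lt0 | exact: hc].
Qed.

Lemma extendable_direction a :
  extendable a -> exists b, forall j, 0 < a * u j + b * v j.
Proof.
move=> /andP [/forallP hv0 /forallP hpair].
pose L i := - (a * u i) / v i.
have shiftE i b : v i != 0 -> a * u i + b * v i = v i * (b - L i).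
  by move=> vi_n0; rewrite /L; field.
have [|b [lowL upL]] := @finite_strict_separation R J (fun i => 0 < v i)
    (fun j => v j < 0) L.
  move=> i j vi_gt0 vj_lt0.
  have := hpair i => /forallP /(_ j) /implyP; rewrite vi_gt0 vj_lt0 => /(_ isT) h.
  have -> : L j = L i + a * (v i * u j - v j * u i) / (v i * - v j).
    by rewrite /L; field; rewrite lt_eqF // gt_eqF.
  by rewrite ltrDl divr_gt0 // mulr_gt0 // oppr_gt0.
exists b => j; case: (ltgtP (v j) 0) => vj.
- by rewrite shiftE ?lt_eqF //; have := upL j vj; nra.
- by rewrite shiftE ?gt_eqF //; have := lowL j vj; nra.
- by have /implyP := hv0 j; rewrite vj eqxx mulr0 addr0; apply.
Qed.

Lemma gordan2 : origin_in_hull \/ exists a b, forall j, 0 < a * u j + b * v j.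
Proof.
have [e1|ne1] := boolP (extendable 1).
  by right; exists 1; apply: extendable_direction.
have [e2|ne2] := boolP (extendable (-1)).
  by right; exists (-1); apply: extendable_direction.
left; have [m1 [c1 [h1 ac1]]] := not_extendable_balanced _ ne1.
have [m2 [c2 [h2 ac2]]] := not_extendable_balanced _ ne2.
apply: (@balanced_weights_origin m1 m2 c1 c2 h1 h2);
  by rewrite ?mul1r ?mulN1r in ac1 ac2; lra.
Qed.

End PlanarGordan.

Definition dot2 {R : comPzRingType} (d y : 'rV[R]_2) : R := \sum_(k < 2) d 0 k * y 0 k.

Section Dot2.
Context {R : comPzRingType} (d : 'rV[R]_2).

Lemma dot2E y : dot2 d y = d 0 0 * y 0 0 + d 0 1 * y 0 1.
Proof.
rewrite /dot2 big_ord_recr big_ord_recl big_ord0 /= addr0.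
have -> : widen_ord (leqnSn 1) ord0 = 0 :> 'I_2 by apply/val_inj.
by have -> : ord_max = 1 :> 'I_2 by apply/val_inj.
Qed.

Lemma dot2D y z : dot2 d (y + z) = dot2 d y + dot2 d z.
Proof. by rewrite !dot2E !mxE; ring. Qed.

Lemma dot2N y : dot2 d (- y) = - dot2 d y.
Proof. by rewrite !dot2E !mxE; ring. Qed.

Lemma dot2_sum (J : finType) (y : J -> 'rV[R]_2) :
  dot2 d (\sum_j y j) = \sum_j dot2 d (y j).
Proof.
by apply: (big_morph _ dot2D); rewrite dot2E !mxE !mulr0 addr0.
Qed.

End Dot2.

Lemma dot2_self_ge0 {R : realDomainType} (d : 'rV[R]_2) : 0 <= dot2 d d.
Proof. by rewrite dot2E addr_ge0 // -expr2 sqr_ge0. Qed.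

Lemma planar_gordan {R : realType} {J : finType} (y : J -> 'rV[R]_2) (p : 'rV[R]_2) :
  in_conv y p \/ exists d, forall j, 0 < dot2 d (y j - p).
Proof.
have [[l [l_ge0 l1 lu lv]]|[a [b hab]]] :=
  gordan2 (fun j => y j 0 0 - p 0 0) (fun j => y j 0 1 - p 0 1).
- left; exists l; split=> //; split=> //.
  have coordE k : \sum_j l j * (y j 0 k - p 0 k) = 0 -> p 0 k = \sum_j l j * y j 0 k.
    under eq_bigr do rewrite mulrBr.
    by rewrite sumrB -mulr_suml l1 mul1r => /eqP; rewrite subr_eq0 => /eqP.
  apply/rowP => k; rewrite summxE; under eq_bigr do rewrite mxE.
  have [->|->] : k = 0 \/ k = 1 by case: k => [[|[|//]]] ?; [left|right]; apply/val_inj.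
  - exact: coordE lu.
  - exact: coordE lv.
- right; exists (\row_(k < 2) if k == 0 then a else b) => j.
  by rewrite dot2E !mxE /=.
Qed.

(* [g >= 0] makes the default value 0 of the maximum harmless. *)
Lemma sum_add_bigmax_lt {R : realDomainType} {J : finType} (j0 : J) (f g : J -> R) :
  (forall j, 0 <= g j) -> (forall j, \sum_i g i + g j < \sum_i f i + f j) ->
  \sum_i g i + \big[Num.max/0]_i g i < \sum_i f i + \big[Num.max/0]_i f i.
Proof.
move=> g_ge0 lt_fg.
set K := \sum_i f i + \big[Num.max/0]_i f i - \sum_i g i.
suff : \big[Num.max/0]_i g i < K by rewrite /K; lra.
have g_lt j : g j < K.
  by have := lt_fg j; have := le_bigmax 0 f j; rewrite /K; lra.
apply: (big_ind (fun z => z < K)) => [|z1 z2 hz1 hz2|j _]; last exact: g_lt.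
- exact: le_lt_trans (g_ge0 j0) (g_lt j0).
- by rewrite gt_max hz1 hz2.
Qed.

Section Descent.
Context {R : realType} {J : finType} (x : J -> 'rV[R]_2).

(* [s] is the image of [Mpreimage s] under [y |-> (y + sum_i x_i) / (n + 1)],
   the affine map sending [x j] to [Mpt x j]. *)
Definition Mpreimage (s : 'rV[R]_2) : 'rV[R]_2 := #|J|.+1%:R *: s - \sum_i x i.

Lemma Mpreimage_in_conv (s : 'rV[R]_2) :
  in_conv x (Mpreimage s) -> in_conv (Mpt x) s.
Proof.
move=> [l [l_ge0 [l1 hp]]]; exists l; split=> //; split=> //.
rewrite /Mpt (eq_bigr (fun j => #|J|.+1%:R^-1 *: (l j *: x j + l j *: \sum_i x i))).
  rewrite -scaler_sumr big_split /= -scaler_suml l1 scale1r -hp /Mpreimage subrK.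
  by rewrite scalerA mulVf ?scale1r // pnatr_eq0.
by move=> j _; rewrite scalerA mulrC -scalerA scalerDr.
Qed.

Lemma sqdist_dot2 (s y : 'rV[R]_2) : sqdist s y = dot2 (s - y) (s - y).
Proof. by rewrite /sqdist /dot2; apply: eq_bigr => k _; rewrite !mxE expr2. Qed.

Lemma sqdist_ge0 (s y : 'rV[R]_2) : 0 <= sqdist s y.
Proof. by rewrite sqdist_dot2 dot2_self_ge0. Qed.

Lemma sqdist_shift (s d : 'rV[R]_2) (e : R) (y : 'rV[R]_2) :
  sqdist (s + e *: d) y = sqdist s y + 2 * e * dot2 d (s - y) + e ^+ 2 * dot2 d d.
Proof. by rewrite !sqdist_dot2 !dot2E !mxE; ring. Qed.

(* [Ppow x s] is the maximum over [j] of the left-hand side at [e = 0]; the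
   first-order term comes from [sum_i (s - x i) + (s - x j) = Mpreimage s - x j]. *)
Lemma sqdist_sum_shift (s d : 'rV[R]_2) (e : R) (j : J) :
  \sum_i sqdist (s + e *: d) (x i) + sqdist (s + e *: d) (x j) =
  \sum_i sqdist s (x i) + sqdist s (x j)
  - 2 * e * dot2 d (x j - Mpreimage s) + #|J|.+1%:R * e ^+ 2 * dot2 d d.
Proof.
have vecE : \sum_i (s - x i) + (s - x j) = - (x j - Mpreimage s).
  rewrite opprB /Mpreimage sumrB sumr_const scaler_nat mulrSr.
  by rewrite addrA (addrAC _ (- _)).
have dotE :
    dot2 d (x j - Mpreimage s) = - (\sum_i dot2 d (s - x i) + dot2 d (s - x j)).
  by rewrite -dot2_sum -dot2D vecE dot2N opprK.
under eq_bigr do rewrite sqdist_shift.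
rewrite sqdist_shift dotE !big_split /= -mulr_sumr sumr_const -mulr_natl -natr1.
by ring.
Qed.

Lemma Ppow_descent (s d : 'rV[R]_2) : (0 < #|J|)%N ->
  (forall j, 0 < dot2 d (x j - Mpreimage s)) -> exists t, Ppow x t < Ppow x s.
Proof.
move=> /card_gt0P [j1 _] hd.
pose w j := dot2 d (x j - Mpreimage s).
have [j0 _ j0_min] := exists_argmax predT (fun j => - w j) (ex_intro _ j1 isT).
have w_min j : w j0 <= w j by have := j0_min j isT; rewrite lerN2.
have w0_gt0 : 0 < w j0 := hd j0.
have c_ge0 := dot2_self_ge0 d.
pose N : R := #|J|.+1%:R.
have N_gt0 : 0 < N by rewrite ltr0n.
have c1_gt0 : 0 < dot2 d d + 1 by lra.
pose e := w j0 / (N * (dot2 d d + 1)).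
have e_gt0 : 0 < e by rewrite divr_gt0 // mulr_gt0.
have eNE : N * e * (dot2 d d + 1) = w j0.
  by rewrite /e; field; rewrite gt_eqF //= addrC natr1 pnatr_eq0.
exists (s + e *: d); rewrite /Ppow; apply: (sum_add_bigmax_lt j1) => [j|j].
  exact: sqdist_ge0.
rewrite sqdist_sum_shift -/N -/(w j).
suff : 2 * e * w j > N * e ^+ 2 * dot2 d d by lra.
have : 0 <= N * e by rewrite mulr_ge0 // ltW.
have := w_min j; nra.
Qed.

End Descent.

Theorem lemma4 (R : realType) (J : finType) (x : J -> 'rV[R]_2)
  (hJ : (0 < #|J|)%N) (hx : injective x) (s : 'rV[R]_2)
  (hmin : forall t : 'rV[R]_2, Ppow x s <= Ppow x t) :
  in_conv (Mpt x) s.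
Proof.
apply: Mpreimage_in_conv.
have [//|[d hd]] := planar_gordan x (Mpreimage x s).
have [t] := Ppow_descent _ _ _ hJ hd.
by rewrite ltNge hmin.
Qed.
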